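(* Let $q$ be a prime power and let $\mathcal{A}$ be an essential free arrangement in $\mathbb{F}_q^3$ with exponents $(1,d_2,d_3)$, where $d_2\leq d_3$. Then $d_2\leq q$.
   Context: A (central) hyperplane arrangement $\mathcal{A}$ in $V=\mathbb{K}^\ell$ is a finite set of codimension-one linear subspaces; it is essential if the intersection of all its hyperplanes is $\{0\}$. Let $S=\mathbb{K}[x_1,\dots,x_\ell]$ be the polynomial ring of $V$, and for each $H\in\mathcal{A}$ fix a nonzero linear form $\alpha_H$ with kernel $H$. $\mathrm{Der}_V=\bigoplus_i S\,\partial/\partial x_i$ is the $S$-module of polynomial vector fields. The module of logarithmic vector fields is $D(\mathcal{A})=\{\delta\in \mathrm{Der}_V : \delta(\alpha_H)\in\alpha_H S \text{ for all } H\in\mathcal{A}\}$. $\mathcal{A}$ is free if $D(\mathcal{A})$ is a free $S$-module; then it has a basis of homogeneous (polynomial-degree) elements, and the multiset of their degrees (the degree of $\sum f_i\partial/\partial x_i$ being the common degree of the homogeneous coefficients $f_i$) is called the exponents of $\mathcal{A}$. *)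

From HB Require Import structures.
From mathcomp Require Import all_boot all_order all_algebra.
From mathcomp Require Import mpoly.
Set Implicit Arguments. Unset Strict Implicit. Unset Printing Implicit Defensive.
Import GRing.Theory.
Local Open Scope ring_scope.

(* A polynomial vector field  sum_i f_i d/dx_i  on K^l, as its coefficient
   family (f_i)_{i < l}. *)
Definition vfield (K : fieldType) (l : nat) := 'I_l -> {mpoly K[l]}.

Definition vf_apply (K : fieldType) (l : nat) (delta : vfield K l)
  (p : {mpoly K[l]}) : {mpoly K[l]} :=
  \sum_(i < l) delta i * p^`M(i).

Definition linform (K : fieldType) (l : nat) (a : {mpoly K[l]}) : Prop :=
  a != 0 /\ a \is 1.-homog.

(* A central arrangement in K^l, given by a list of defining linear forms
   alpha_H, one for each hyperplane H, the hyperplanes being pairwise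
   distinct (i.e. the forms are pairwise non-proportional). *)
Definition arrangement (K : fieldType) (l : nat) (A : seq {mpoly K[l]}) : Prop :=
  (forall a, a \in A -> linform a) /\
  (forall i j : nat, (i < size A)%N -> (j < size A)%N -> i <> j ->
     forall c : K, nth 0 A i != c *: nth 0 A j).

Definition essential (K : fieldType) (l : nat) (A : seq {mpoly K[l]}) : Prop :=
  forall v : 'I_l -> K, (forall a, a \in A -> a.@[v] = 0) -> v = (fun _ => 0).

Definition logder (K : fieldType) (l : nat) (A : seq {mpoly K[l]})
  (delta : vfield K l) : Prop :=
  forall a, a \in A -> exists g : {mpoly K[l]}, vf_apply delta a = a * g.

Definition vf_homog (K : fieldType) (l : nat) (d : nat) (delta : vfield K l) : Prop :=
  forall i, delta i \is d.-homog.

Definition logder_basis (K : fieldType) (l : nat) (A : seq {mpoly K[l]})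
  (theta : 'I_l -> vfield K l) : Prop :=
  [/\ forall j, logder A (theta j),
      forall delta, logder A delta ->
        exists f : 'I_l -> {mpoly K[l]},
          forall i, delta i = \sum_(j < l) f j * theta j i
    &
      forall f : 'I_l -> {mpoly K[l]},
        (forall i, \sum_(j < l) f j * theta j i = 0) -> forall j, f j = 0].

(* A is free with exponents e = (e_1, ..., e_l): D(A) has an S-basis of
   homogeneous vector fields whose degrees are e (as a list; the order is
   immaterial since a basis can be permuted). *)
Definition free_with_exponents (K : fieldType) (l : nat) (A : seq {mpoly K[l]})
  (e : seq nat) : Prop :=
  size e = l /\
  exists theta : 'I_l -> vfield K l,
    logder_basis A theta /\ forall j : 'I_l, vf_homog (nth 0%N e j) (theta j).

From HB Require Import structures.
From mathcomp Require Import all_boot all_order all_algebra.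
From mathcomp Require Import mpoly.
From mathcomp Require Import finfield zify.
Set Implicit Arguments. Unset Strict Implicit. Unset Printing Implicit Defensive.
Import GRing.Theory.
Local Open Scope ring_scope.

(* Suppose q := #|F| < d2.  The Euler field sum_i x_i d/dx_i and the Frobenius
   field sum_i x_i^q d/dx_i are logarithmic for every arrangement (they send a
   linear form a to a and to a^q).  Written in the homogeneous basis, their
   components of degree 1 and q < d2 can only involve the basis element
   theta_1 of degree 1, so x_i = c theta_1(i) and x_i^q = g theta_1(i).  Hence
   c x_i^q = g x_i for all i, and c (x_0^q x_1 - x_1^q x_0) = 0 with c <> 0,
   which fails as q <> 1. *)

Lemma pihomogMr (R : nzRingType) (n : nat) (f h : {mpoly R[n]}) e k :
  h \is e.-homog ->
  pihomog mdeg k (f * h) = if (e <= k)%N then pihomog mdeg (k - e) f * h else 0.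
Proof.
move=> hh; pose N := (msize f + k).+1.
rewrite [in LHS](@pihomog_partitionE _ _ mdeg N f); last by rewrite /N; lia.
rewrite mulr_suml raddf_sum /=.
rewrite (eq_bigr (fun d : 'I_N => if (d + e == k)%N then pihomog mdeg d f * h else 0)); last first.
  move=> d _; have hd := dhomogM (pihomogP mdeg d f) hh.
  by case: eqP => [<-|/eqP ne]; [exact: pihomog_dE | exact: pihomog_ne0 ne hd].
case: leqP => ek.
- have lt : (k - e < N)%N by rewrite /N; lia.
  rewrite (bigD1 (Ordinal lt)) //= subnK // eqxx big1 ?addr0 // => d ne.
  case: eqP => // de; case/eqP: ne; apply: val_inj => /=; lia.
- by rewrite big1 // => d _; case: eqP => // de; lia.
Qed.

Section VectorFields.
Variables (K : fieldType) (n : nat).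
Implicit Types (delta : vfield K n) (a : {mpoly K[n]}).

Lemma vf_homogX : vf_homog 1 (fun i : 'I_n => 'X_i : {mpoly K[n]}).
Proof. by move=> i; rewrite dhomogX; apply/eqP; exact: mdeg1. Qed.

Lemma vf_homogXn q : vf_homog q (fun i : 'I_n => 'X_i ^+ q : {mpoly K[n]}).
Proof. by move=> i; have := dhomogMn q (vf_homogX i); rewrite mul1n. Qed.

Lemma vf_apply_mpolyE delta a :
  vf_apply delta a = \sum_(m <- msupp a) a@_m *: vf_apply delta 'X_[m].
Proof.
rewrite /vf_apply {1}(mpolyE a); under eq_bigr do rewrite raddf_sum mulr_sumr.
rewrite exchange_big /=; apply: eq_bigr => m _; rewrite scaler_sumr.
by apply: eq_bigr => i _; rewrite mderivZ scalerAr.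
Qed.

Lemma vf_apply_homog delta d a (b : 'X_{1..n} -> {mpoly K[n]}) :
  a \is d.-homog ->
  (forall m, mdeg m = d -> vf_apply delta 'X_[m] = b m) ->
  vf_apply delta a = \sum_(m <- msupp a) a@_m *: b m.
Proof.
move=> /dhomogP ha hb; rewrite vf_apply_mpolyE !big_seq.
by apply: eq_bigr => m /ha /hb ->.
Qed.

Lemma vf_apply_euler_monomial (m : 'X_{1..n}) :
  vf_apply (fun i => 'X_i) 'X_[m] = (mdeg m)%:R *: 'X_[m] :> {mpoly K[n]}.
Proof.
rewrite /vf_apply mdegE natr_sum scaler_suml; apply: eq_bigr => i _.
rewrite mderivX -scalerAr -mpolyXD.
have [->|mi] := posnP (m i); first by rewrite !scale0r.
congr (_ *: 'X_[_]); apply/mnmP => j; rewrite mnmDE mnmBE mnm1E.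
by case: eqP => [<-|]; rewrite ?subn0 // add1n subn1 prednK.
Qed.

Lemma vf_apply_euler d a :
  a \is d.-homog -> vf_apply (fun i => 'X_i) a = d%:R *: a.
Proof.
move=> ha; rewrite (vf_apply_homog (b := fun m => d%:R *: 'X_[m]) ha).
  by rewrite [in RHS](mpolyE a) scaler_sumr; apply: eq_bigr => m _; rewrite !scalerA mulrC.
by move=> m <-; exact: vf_apply_euler_monomial.
Qed.

Lemma vf_apply_Xn_linear_monomial q (m : 'X_{1..n}) : mdeg m = 1%N ->
  vf_apply (fun i => 'X_i ^+ q) 'X_[m] = 'X_[m] ^+ q :> {mpoly K[n]}.
Proof.
move/eqP/mdeg1P => [j /eqP ->]; rewrite /vf_apply (bigD1 j) //= big1 ?addr0.
  rewrite mderivX mnm1E eqxx scale1r.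
  have -> : (U_(j) - U_(j) = 0)%MM by apply/mnmP => k; rewrite mnmBE subnn mnm0E.
  by rewrite mpolyX0 mulr1.
by move=> i ij; rewrite mderivX mnm1E eq_sym (negbTE ij) scale0r mulr0.
Qed.

Lemma logder_euler A : arrangement A -> logder A (fun i => 'X_i : {mpoly K[n]}).
Proof.
by move=> [hA _] a /hA [_ ha]; exists 1; rewrite mulr1 (vf_apply_euler ha) scale1r.
Qed.

End VectorFields.

Section FiniteField.
Variables (F : finFieldType) (n : nat).
Local Notation q := #|F|.

Lemma exprD_card_sum (I : Type) (s : seq I) (f : I -> {mpoly F[n]}) :
  (\sum_(i <- s) f i) ^+ q = \sum_(i <- s) f i ^+ q.
Proof.
have [p pr charFp] := finPcharP F.
have q_pnat : [pchar {mpoly F[n]}].-nat q.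
  apply: sub_in_pnat (_ : p.-nat q) => [r _|].
    by rewrite inE (pchar_lalg {mpoly F[n]}) => /eqP ->.
  by rewrite (card_pprimeChar charFp) pnatX pnat_id.
elim: s => [|x s IH]; last by rewrite !big_cons exprDn_pchar // IH.
by rewrite !big_nil expr0n; case: q (finNzRing_gt1 F).
Qed.

Lemma vf_apply_frobenius (a : {mpoly F[n]}) :
  a \is 1.-homog -> vf_apply (fun i => 'X_i ^+ q) a = a ^+ q.
Proof.
move=> ha; rewrite (vf_apply_homog (b := fun m => 'X_[m] ^+ q) ha).
  rewrite [in RHS](mpolyE a) exprD_card_sum; apply: eq_bigr => m _.
  by rewrite exprZn expf_card.
exact: vf_apply_Xn_linear_monomial.
Qed.

Lemma logder_frobenius (A : seq {mpoly F[n]}) :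
  arrangement A -> logder A (fun i => 'X_i ^+ q).
Proof.
move=> [hA _] a /hA [_ ha]; exists (a ^+ q.-1).
by rewrite vf_apply_frobenius // -exprS prednK // ltnW // finNzRing_gt1.
Qed.

End FiniteField.

Lemma logder_homog_multiple (K : fieldType) (l : nat) (A : seq {mpoly K[l]})
    (theta : 'I_l -> vfield K l) (e : 'I_l -> nat) (j0 : 'I_l) k (delta : vfield K l) :
  logder_basis A theta -> (forall j, vf_homog (e j) (theta j)) ->
  (e j0 <= k)%N -> (forall j, j != j0 -> (k < e j)%N) ->
  logder A delta -> vf_homog k delta ->
  exists g, forall i, delta i = g * theta j0 i.
Proof.
move=> [_ span _] htheta ek ltk hdelta hk; have [f hf] := span _ hdelta.
exists (pihomog mdeg (k - e j0) (f j0)) => i.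
rewrite -[delta i](pihomog_dE (hk i)) hf raddf_sum (bigD1 j0) //= big1 ?addr0.
  by rewrite (pihomogMr _ _ (htheta j0 i)) ek.
by move=> j /ltk ltkj; rewrite (pihomogMr _ _ (htheta j i)) leqNgt ltkj.
Qed.

Lemma frobenius_euler_not_proportional (R : idomainType) (n : nat) (i j : 'I_n) q
    (theta : 'I_n -> {mpoly R[n]}) c g :
  i != j -> q != 1%N ->
  (forall k, 'X_k = c * theta k) -> (forall k, 'X_k ^+ q = g * theta k) -> False.
Proof.
move=> ij q1 hX hXq.
have c0 : c != 0.
  apply: contra_eq_neq (hX i) => ->; rewrite mul0r.
  by apply/eqP => /(congr1 (mcoeff U_(i))); rewrite mcoeffX eqxx mcoeff0 => /eqP; rewrite oner_eq0.
have hc k : c * 'X_k ^+ q = g * 'X_k by rewrite hXq hX mulrCA.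
have : c * ('X_i ^+ q * 'X_j - 'X_j ^+ q * 'X_i) = 0.
  by rewrite mulrBr !mulrA !hc mulrAC subrr.
move/eqP; rewrite mulf_eq0 (negbTE c0) /= subr_eq0 => /eqP.
move=> /(congr1 (mcoeff (U_(i) *+ q + U_(j))%MM)).
rewrite !mpolyXn -!mpolyXD !mcoeffX eqxx.
suff -> : ((U_(j) *+ q + U_(i))%MM == (U_(i) *+ q + U_(j))%MM) = false.
  by move/eqP; rewrite oner_eq0.
apply/negbTE; apply: contra q1 => /eqP /mnmP /(_ i).
by rewrite !mnmDE !mulmnE !mnm1E eqxx eq_sym (negbTE ij) mul0n mul1n addn0 add0n => <-.
Qed.

Theorem mainTheorem4 (F : finFieldType) (A : seq {mpoly F[3]}) (d2 d3 : nat) :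
  arrangement A -> essential A ->
  free_with_exponents A [:: 1%N; d2; d3] -> (d2 <= d3)%N ->
  (d2 <= #|F|)%N.
Proof.
move=> hA _ [_ [theta [hbasis hdeg]]] d2_le_d3; rewrite leqNgt; apply/negP => q_lt_d2.
have q_gt1 : (1 < #|F|)%N := finNzRing_gt1 F.
have d2_le_e (j : 'I_3) : j != ord0 -> (d2 <= nth 0 [:: 1; d2; d3] j)%N.
  by case: j => [[|[|[|]]] //=] _ _; lia.
have [c hX] := logder_homog_multiple hbasis hdeg (j0 := ord0) (leqnn 1)
  (fun j j0 => ltn_trans q_gt1 (leq_trans q_lt_d2 (d2_le_e j j0)))
  (logder_euler hA) (@vf_homogX _ _).
have [g hXq] := logder_homog_multiple hbasis hdeg (j0 := ord0) (ltnW q_gt1)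
  (fun j j0 => leq_trans q_lt_d2 (d2_le_e j j0))
  (logder_frobenius hA) (@vf_homogXn _ _ _).
apply: (frobenius_euler_not_proportional (i := 0) (j := 1)) hX hXq => //.
by rewrite neq_ltn q_gt1 orbT.
Qed.
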